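(* For every $j\ge 0$ the limit $p_j^*=\lim_{n\to\infty}p_{j,n}$ exists; put $u_0^*=0$ and $u_j^*=1/p_{j-1}^*$ for $j\ge1$, and $$S_N=\sum_{j=0}^N\bigl(3-2p_j^*-p_j^*u_j^*\bigr).$$ Then the limits $S=\lim_{N\to\infty}S_N$ and $C=\lim_{n\to\infty}C_n$ exist, and $C=2S+1$.
   Context: For $n\ge1$ and $\mathbf{x}=(x_1,\dots,x_n)\in(0,\infty)^n$ let $f_n(\mathbf{x})=\sum_{i=1}^n x_i+\sum_{1\le i\le j\le n}\prod_{k=i}^j \frac1{x_k}$, $A_n=\inf_{\mathbf{x}\in(0,\infty)^n} f_n(\mathbf{x})$, and $C_n=3n-A_n$. Let $\Phi$ be the partial map of $\mathbb{R}^2$ defined for $p\ne0$ by $\Phi(p,u)=\bigl(p^2(u+1)-1,\ 1/p\bigr)$. For $n\ge1$, the trajectory $T_n$ is the (existing and unique) finite sequence $(p_{j,n},u_{j,n})$, $j=0,\dots,n$, with $(p_{j,n},u_{j,n})=\Phi(p_{j-1,n},u_{j-1,n})$ for $1\le j\le n$, $u_{0,n}=0$, $p_{n,n}=0$, and $p_{j,n}>0$ for $0\le j\le n-1$. *)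

From Stdlib Require Import Reals Lra ClassicalEpsilon.
From Coquelicot Require Import Coquelicot.
Open Scope R_scope.

Fixpoint sumR (n : nat) (g : nat -> R) : R :=
  match n with O => 0 | S m => sumR m g + g m end.

Fixpoint prodR (a len : nat) (g : nat -> R) : R :=
  match len with O => 1 | S m => g a * prodR (S a) m g end.

(* f_n(x), with x_1..x_n stored as x 0 .. x (n-1):
   sum_i x_i + sum_{i <= j} prod_{k=i}^{j} 1/x_k ; j = i + d. *)
Definition f_n (n : nat) (x : nat -> R) : R :=
  sumR n x + sumR n (fun i => sumR (n - i) (fun d => prodR i (S d) (fun k => / x k))).

(* A_n = inf over x in (0,oo)^n of f_n(x)  (finite since f_n >= 0) *)
Definition A_n (n : nat) : R :=
  real (Glb_Rbar (fun y => exists x : nat -> R,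
          (forall i, (i < n)%nat -> 0 < x i) /\ y = f_n n x)).

Definition C_n (n : nat) : R := 3 * INR n - A_n n.

(* The partial map Phi(p,u) = (p^2 (u+1) - 1, 1/p), used for p <> 0. *)
Definition Phi (pu : R * R) : R * R :=
  let (p, u) := pu in (p ^ 2 * (u + 1) - 1, / p).

Definition is_trajectory (n : nat) (pu : (nat -> R) * (nat -> R)) : Prop :=
  let (p, u) := pu in
  u 0%nat = 0 /\ p n = 0 /\
  (forall j, (j < n)%nat -> 0 < p j) /\
  (forall j, (1 <= j <= n)%nat -> (p j, u j) = Phi (p (j - 1)%nat, u (j - 1)%nat)).

Definition traj (n : nat) : (nat -> R) * (nat -> R) :=
  epsilon (inhabits ((fun _ => 0), (fun _ => 0))) (is_trajectory n).

Definition p_jn (j n : nat) : R := fst (traj n) j.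

From Stdlib Require Import Reals Lra Lia ClassicalEpsilon.
From Coquelicot Require Import Coquelicot.
Open Scope R_scope.

(* The orbit [p_j(s)] of [Phi] through [(s, 0)] is increasing in [s] as long as it
   stays positive, so [T_n] is the orbit through the unique root [s = p_(0,n)] of [p_n]
   with [p_0, ..., p_(n-1) > 0]; these roots increase to a limit, and [p_j*] is the
   orbit through it.  Along [T_n] the [p_j] decrease, and since the reversed
   reciprocal orbit is again such a root orbit, [p_(n-1-j) = 1 / p_j].

   Adding tangent-line bounds for [ln] weighted by [r_j = u_j p_j] (a telescoping
   potential) shows [A_n = sum_j (p_j + u_j p_j + u_(j+1))], attained at
   [x_j = (1 + u_j) p_j].  Hence
   [C_n = 1 + sum_(i<n-1) (1 - p_(i+1) / p_i) - sum_(j<n) (p_j + 1 / p_j - 2)]: two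
   palindromic sums, each half of which converges to the series [A], resp. [B], of
   the same terms at [p*], because the tails are uniformly small (below [2 ln p_K*],
   resp. the tail of [B]).  So [C = 1 + 2 (A - B)], while [S_N] telescopes to [A - B]. *)

Lemma sumR_S n g : sumR (S n) g = sumR n g + g n.
Proof. reflexivity. Qed.

Lemma sumR_ext n g h : (forall i, (i < n)%nat -> g i = h i) -> sumR n g = sumR n h.
Proof.
  induction n as [|n IH]; intros H; [reflexivity|].
  rewrite !sumR_S, IH by (intros; apply H; lia). rewrite H by lia. reflexivity.
Qed.

Lemma sumR_add n g h : sumR n (fun i => g i + h i) = sumR n g + sumR n h.
Proof. induction n as [|n IH]; simpl; [ring|rewrite IH; ring]. Qed.

Lemma sumR_sub n g h : sumR n (fun i => g i - h i) = sumR n g - sumR n h.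
Proof. induction n as [|n IH]; simpl; [ring|rewrite IH; ring]. Qed.

Lemma sumR_mult_r n g c : sumR n (fun i => g i * c) = sumR n g * c.
Proof. induction n as [|n IH]; simpl; [ring|rewrite IH; ring]. Qed.

Lemma sumR_const n c : sumR n (fun _ => c) = INR n * c.
Proof. induction n as [|n IH]; [simpl; ring|rewrite sumR_S, IH, S_INR; ring]. Qed.

Lemma sumR_shift n g : sumR (S n) g = g 0%nat + sumR n (fun i => g (S i)).
Proof. induction n as [|n IH]; [simpl; ring|rewrite sumR_S, IH, sumR_S; ring]. Qed.

Lemma sumR_add_len m k g : sumR (m + k) g = sumR m g + sumR k (fun i => g (m + i)%nat).
Proof.
  induction k as [|k IH]; [rewrite Nat.add_0_r; simpl; ring|].
  rewrite Nat.add_succ_r, !sumR_S, IH; ring.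
Qed.

Lemma sumR_rev n g : sumR n g = sumR n (fun i => g (n - 1 - i)%nat).
Proof.
  induction n as [|n IH]; [reflexivity|].
  rewrite sumR_S, sumR_shift, IH, Nat.sub_0_r, Nat.sub_succ, Nat.sub_0_r, Rplus_comm.
  f_equal. apply sumR_ext. intros i Hi. f_equal. lia.
Qed.

Lemma div2_bounds n : (2 * (n / 2) <= n <= 2 * (n / 2) + 1)%nat.
Proof. pose proof (Nat.div_mod_eq n 2); pose proof (Nat.mod_upper_bound n 2); lia. Qed.

Lemma sumR_palindrome n g : (forall i, (i < n)%nat -> g i = g (n - 1 - i)%nat) ->
  sumR n g = sumR (n / 2) g + sumR (n - n / 2) g.
Proof.
  intros Hg. pose proof (div2_bounds n).
  replace n with (n / 2 + (n - n / 2))%nat at 1 by lia.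
  rewrite sumR_add_len, (sumR_rev (n - n / 2)). f_equal.
  apply sumR_ext. intros i Hi. rewrite Hg by lia. f_equal. lia.
Qed.

Lemma sumR_telescope n f : sumR n (fun i => f i - f (S i)) = f 0%nat - f n.
Proof. induction n as [|n IH]; [simpl; ring|rewrite sumR_S, IH; ring]. Qed.

Lemma sumR_le n g h : (forall i, (i < n)%nat -> g i <= h i) -> sumR n g <= sumR n h.
Proof.
  induction n as [|n IH]; intros H; simpl; [lra|].
  apply Rplus_le_compat; [apply IH; intros; apply H|apply H]; lia.
Qed.

Lemma sumR_diff_le K M g h : (K <= M)%nat ->
  (forall i, (K <= i < M)%nat -> 0 <= g i <= h i) ->
  0 <= sumR M g - sumR K g <= sumR M h - sumR K h.
Proof.
  intros HKM H. induction M as [|M IH].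
  - replace K with 0%nat by lia. simpl. lra.
  - destruct (Nat.eq_dec K (S M)) as [->|HK]; [lra|].
    rewrite !sumR_S. pose proof (H M ltac:(lia)).
    assert (0 <= sumR M g - sumR K g <= sumR M h - sumR K h)
      by (apply IH; [lia|intros; apply H; lia]).
    lra.
Qed.

Lemma sumR_triangle n (F : nat -> nat -> R) :
  sumR n (fun i => sumR (n - i) (F i))
  = sumR n (fun j => sumR (S j) (fun i => F i (j - i)%nat)).
Proof.
  induction n as [|n IH]; [reflexivity|].
  rewrite (sumR_ext (S n) _ (fun i => sumR (n - i) (F i) + F i (n - i)%nat)).
  2:{ intros i Hi. replace (S n - i)%nat with (S (n - i)) by lia. reflexivity. }
  rewrite sumR_add, !sumR_S, Nat.sub_diag, IH. simpl. ring.
Qed.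

Lemma prodR_last m a g : prodR a (S m) g = prodR a m g * g (a + m)%nat.
Proof.
  revert a. induction m as [|m IH]; intros a.
  - simpl. rewrite Nat.add_0_r. ring.
  - change (prodR a (S (S m)) g) with (g a * prodR (S a) (S m) g).
    rewrite IH. simpl. rewrite Nat.add_succ_r. ring.
Qed.

Lemma is_lim_seq_sumR K (x : nat -> nat -> R) (xs : nat -> R) :
  (forall k, is_lim_seq (fun n => x n k) (xs k)) ->
  is_lim_seq (fun n => sumR K (x n)) (sumR K xs).
Proof.
  intros H. induction K as [|K IH]; [apply is_lim_seq_const|].
  apply (is_lim_seq_plus' _ _ _ _ IH (H K)).
Qed.

Lemma sumR_incr_nonneg g : (forall j, 0 <= g j) -> forall n, sumR n g <= sumR (S n) g.
Proof. intros H n. rewrite sumR_S. pose proof (H n). lra. Qed.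

Definition seriesR (g : nat -> R) : R := real (Lim_seq (fun n => sumR n g)).

Lemma is_lim_seq_sumR_bounded g B : (forall j, 0 <= g j) -> (forall n, sumR n g <= B) ->
  is_lim_seq (fun n => sumR n g) (seriesR g).
Proof.
  intros Hg HB. apply Lim_seq_correct', (ex_finite_lim_seq_incr _ B); auto.
  now apply sumR_incr_nonneg.
Qed.

Lemma sumR_le_lim g (X : R) : (forall j, 0 <= g j) -> is_lim_seq (fun n => sumR n g) X ->
  forall n, sumR n g <= X.
Proof. intros Hg HX. apply is_lim_seq_incr_compare; auto. now apply sumR_incr_nonneg. Qed.

Lemma is_lim_seq_series_term g (X : R) : is_lim_seq (fun n => sumR n g) X -> is_lim_seq g 0.
Proof.
  intros HX. apply is_lim_seq_ext with (fun n => sumR (S n) g - sumR n g).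
  - intros n. rewrite sumR_S. ring.
  - replace 0 with (X - X) by ring. apply is_lim_seq_minus'; auto.
    apply (is_lim_seq_incr_1 (fun n => sumR n g)); auto.
Qed.

Section UniformTail.

Variables (x : nat -> nat -> R) (xs e : nat -> R) (X : R).
Hypothesis x_lim : forall k, is_lim_seq (fun n => x n k) (xs k).
Hypothesis xs_series : is_lim_seq (fun N => sumR N xs) X.
Hypothesis e_lim : is_lim_seq e 0.

Lemma is_lim_seq_sumR_uniform_tail (M : nat -> nat) :
  (forall K, exists N, forall n, (N <= n)%nat -> (K <= M n)%nat) ->
  (forall n K, (K <= M n)%nat -> Rabs (sumR (M n) (x n) - sumR K (x n)) <= e K) ->
  is_lim_seq (fun n => sumR (M n) (x n)) X.
Proof.
  intros HM Htail. apply is_lim_seq_spec. intros eps.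
  assert (E3 : 0 < eps / 3) by (destruct eps; simpl; lra).
  pose proof e_lim as He. pose proof xs_series as HX.
  apply is_lim_seq_spec in He. destruct (He (mkposreal _ E3)) as [K1 HK1].
  apply is_lim_seq_spec in HX. destruct (HX (mkposreal _ E3)) as [K2 HK2].
  set (K := Nat.max K1 K2).
  pose proof (is_lim_seq_sumR K x xs x_lim) as HS.
  apply is_lim_seq_spec in HS. destruct (HS (mkposreal _ E3)) as [N1 HN1].
  destruct (HM K) as [N2 HN2].
  exists (Nat.max N1 N2). intros n Hn.
  specialize (HK1 K ltac:(unfold K; lia)). specialize (HK2 K ltac:(unfold K; lia)).
  specialize (HN1 n ltac:(lia)). specialize (Htail n K (HN2 n ltac:(lia))). simpl in *.
  rewrite Rminus_0_r in HK1. apply Rabs_def2 in HK1, HK2, HN1.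
  apply Rabs_le_between in Htail. apply Rabs_def1; lra.
Qed.

Lemma is_lim_seq_sumR_palindrome (L : nat -> nat) :
  (forall K, exists N, forall n, (N <= n)%nat -> (K <= L n)%nat) ->
  (forall n i, (i < L n)%nat -> x n i = x n (L n - 1 - i)%nat) ->
  (forall n K M, (K <= M <= L n - L n / 2)%nat ->
     Rabs (sumR M (x n) - sumR K (x n)) <= e K) ->
  is_lim_seq (fun n => sumR (L n) (x n)) (2 * X).
Proof.
  intros HL Hsym Htail.
  apply is_lim_seq_ext with (fun n => sumR (L n / 2) (x n) + sumR (L n - L n / 2) (x n)).
  { intros n. symmetry. apply sumR_palindrome, Hsym. }
  replace (2 * X) with (X + X) by ring.
  assert (Hhalf : forall K, exists N, forall n, (N <= n)%nat -> (K <= L n / 2)%nat).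
  { intros K. destruct (HL (2 * K)%nat) as [N HN]. exists N. intros n Hn.
    specialize (HN n Hn). pose proof (div2_bounds (L n)). lia. }
  apply is_lim_seq_plus'; apply is_lim_seq_sumR_uniform_tail.
  - exact Hhalf.
  - intros n K HK. apply Htail. pose proof (div2_bounds (L n)). lia.
  - intros K. destruct (Hhalf K) as [N HN]. exists N. intros n Hn.
    specialize (HN n Hn). pose proof (div2_bounds (L n)). lia.
  - intros n K HK. apply Htail. lia.
Qed.

End UniformTail.

Lemma ln_le_sub_1 x : 0 < x -> ln x <= x - 1.
Proof. intros H. pose proof (exp_ineq1_le (ln x)) as E. rewrite exp_ln in E by exact H. lra. Qed.

Lemma ln_tangent_le z z' : 0 < z -> 0 < z' -> z' * (1 + ln z - ln z') <= z.
Proof.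
  intros Hz Hz'. pose proof (ln_le_sub_1 (z / z') (Rdiv_lt_0_compat _ _ Hz Hz')) as H.
  rewrite ln_div in H by auto.
  apply Rmult_le_compat_l with (r := z') in H; [|lra].
  replace (z' * (z / z' - 1)) with (z - z') in H by (field; lra). lra.
Qed.

Lemma one_sub_div_le_ln x y : 0 < y -> y <= x -> 0 <= 1 - y / x <= ln x - ln y.
Proof.
  intros Hy Hyx. assert (Hx : 0 < x) by lra. split.
  - enough (y / x <= 1) by lra.
    apply Rmult_le_reg_r with x; auto. unfold Rdiv.
    rewrite Rmult_assoc, Rinv_l; lra.
  - pose proof (ln_le_sub_1 (y / x) (Rdiv_lt_0_compat _ _ Hy Hx)) as H.
    rewrite ln_div in H by auto. lra.
Qed.

Definition am_gm_gap (x : R) : R := x + / x - 2.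

Lemma am_gm_gap_nonneg x : 0 < x -> 0 <= am_gm_gap x.
Proof.
  intros Hx. unfold am_gm_gap.
  replace (x + / x - 2) with ((x - 1) ^ 2 / x) by (field; lra).
  apply Rdiv_le_0_compat; [apply pow2_ge_0|lra].
Qed.

Lemma am_gm_gap_le x y : 1 <= x <= y -> am_gm_gap x <= am_gm_gap y.
Proof.
  intros Hxy. unfold am_gm_gap.
  assert (E : y + / y - 2 - (x + / x - 2) = (y - x) * (1 - / (x * y))) by (field; split; lra).
  assert (/ (x * y) <= 1) by (rewrite <- Rinv_1; apply Rinv_le_contravar; nra).
  assert (0 <= (y - x) * (1 - / (x * y))) by (apply Rmult_le_pos; lra).
  lra.
Qed.

Lemma am_gm_gap_le_sub_inv x : 1 <= x -> am_gm_gap x <= x - / x.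
Proof.
  intros Hx. unfold am_gm_gap.
  assert (/ x <= 1) by (rewrite <- Rinv_1; apply Rinv_le_contravar; lra). lra.
Qed.

Lemma am_gm_gap_inv x : x <> 0 -> am_gm_gap (/ x) = am_gm_gap x.
Proof. intros Hx. unfold am_gm_gap. rewrite Rinv_inv. ring. Qed.

Lemma am_gm_gap_continuity_pt x : x <> 0 -> continuity_pt am_gm_gap x.
Proof.
  intros Hx. apply continuity_pt_minus; [|apply continuity_pt_const; intros ? ?; reflexivity].
  apply continuity_pt_plus; [apply continuity_pt_id|].
  apply continuity_pt_inv; [apply continuity_pt_id|exact Hx].
Qed.

(** * The orbit of [Phi] through [(s, 0)] *)

Definition orbit (s : R) (j : nat) : R * R := Nat.iter j Phi (s, 0).
Definition orb_p (s : R) (j : nat) : R := fst (orbit s j).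
Definition orb_u (s : R) (j : nat) : R := snd (orbit s j).
(* For [j >= 1] this is the ratio [p_j / p_(j-1)]. *)
Definition orb_r (s : R) (j : nat) : R := orb_u s j * orb_p s j.

Lemma orbit_S s j : orbit s (S j) = Phi (orbit s j).
Proof. reflexivity. Qed.

Lemma orb_p_S s j : orb_p s (S j) = orb_p s j ^ 2 * (orb_u s j + 1) - 1.
Proof. unfold orb_p, orb_u. rewrite orbit_S. now destruct (orbit s j). Qed.

Lemma orb_u_S s j : orb_u s (S j) = / orb_p s j.
Proof. unfold orb_p, orb_u. rewrite orbit_S. now destruct (orbit s j). Qed.

Lemma orb_r_0 s : orb_r s 0 = 0.
Proof. unfold orb_r, orb_u. simpl. ring. Qed.

Lemma orb_r_S_div s j : orb_r s (S j) = orb_p s (S j) / orb_p s j.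
Proof. unfold orb_r. rewrite orb_u_S. unfold Rdiv. ring. Qed.

Lemma orb_p_S_r s j : orb_p s (S j) = orb_p s j * (orb_p s j + orb_r s j) - 1.
Proof. rewrite orb_p_S. unfold orb_r. ring. Qed.

Lemma orb_r_S s j : orb_p s j <> 0 ->
  orb_r s (S j) = orb_r s j + orb_p s j - / orb_p s j.
Proof. intros H. rewrite orb_r_S_div, orb_p_S_r. field. exact H. Qed.

Definition pos_upto (n : nat) (s : R) : Prop := forall k, (k < n)%nat -> 0 < orb_p s k.

Lemma pos_upto_le m n s : (m <= n)%nat -> pos_upto n s -> pos_upto m s.
Proof. intros H G k Hk. apply G. lia. Qed.

Lemma orb_u_nonneg j s : pos_upto j s -> 0 <= orb_u s j.
Proof.
  destruct j as [|j]; intros G; [unfold orb_u; simpl; lra|].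
  rewrite orb_u_S. left. apply Rinv_0_lt_compat, G. lia.
Qed.

Lemma orb_r_nonneg j s : pos_upto (S j) s -> 0 <= orb_r s j.
Proof.
  intros G. apply Rmult_le_pos.
  - apply orb_u_nonneg, (pos_upto_le j (S j)); auto.
  - left. apply G. lia.
Qed.

(* [r_j] is carried along because [p_(j+1) = p_j (p_j + r_j) - 1]. *)
Lemma orbit_lt_mono j s s' : pos_upto j s -> s < s' ->
  orb_p s j < orb_p s' j /\ orb_r s j <= orb_r s' j.
Proof.
  intros G Hs. induction j as [|j IH].
  - rewrite !orb_r_0. split; [exact Hs|lra].
  - destruct IH as [Hp Hr]; [apply (pos_upto_le j (S j)); auto|].
    assert (Hp0 : 0 < orb_p s j) by (apply G; lia).
    pose proof (orb_r_nonneg j s G).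
    rewrite !orb_p_S_r, !orb_r_S by lra. split; [nra|].
    assert (/ orb_p s' j < / orb_p s j) by (apply Rinv_lt_contravar; nra).
    lra.
Qed.

Lemma orb_p_lt_mono j s s' : pos_upto j s -> s < s' -> orb_p s j < orb_p s' j.
Proof. intros G H. apply (orbit_lt_mono j s s' G H). Qed.

Lemma orb_p_le_mono j s s' : pos_upto j s -> s <= s' -> orb_p s j <= orb_p s' j.
Proof. intros G [H|<-]; [left; now apply orb_p_lt_mono|lra]. Qed.

Lemma pos_upto_mono n s s' : pos_upto n s -> s <= s' -> pos_upto n s'.
Proof.
  intros G H k Hk. apply Rlt_le_trans with (orb_p s k); [apply G; lia|].
  apply orb_p_le_mono; [apply (pos_upto_le k n)|]; auto with arith.
Qed.

Lemma orb_p_ge_2 s j : 2 <= s -> 2 <= orb_p s j.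
Proof.
  intros Hs. enough (2 <= orb_p s j /\ 0 <= orb_u s j) by tauto.
  induction j as [|j [Hp Hu]]; [unfold orb_p, orb_u; simpl; lra|].
  rewrite orb_p_S, orb_u_S. split; [nra|].
  left. apply Rinv_0_lt_compat. lra.
Qed.

Lemma continuity_pt_orb_p_S j x :
  continuity_pt (fun s => orb_p s j) x -> continuity_pt (fun s => orb_u s j) x ->
  continuity_pt (fun s => orb_p s (S j)) x.
Proof.
  intros Cp Cu.
  apply continuity_pt_ext with (fun s => orb_p s j * orb_p s j * (orb_u s j + 1) - 1).
  { intros s. rewrite orb_p_S. ring. }
  apply continuity_pt_minus; [|apply continuity_pt_const; intros ? ?; reflexivity].
  apply continuity_pt_mult; [now apply continuity_pt_mult|].
  apply continuity_pt_plus; [exact Cu|apply continuity_pt_const; intros ? ?; reflexivity].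
Qed.

Lemma orbit_continuity_pt j x : (forall k, (k < j)%nat -> orb_p x k <> 0) ->
  continuity_pt (fun s => orb_p s j) x /\ continuity_pt (fun s => orb_u s j) x.
Proof.
  induction j as [|j IH]; intros Hx.
  - split; [apply continuity_pt_id|apply continuity_pt_const; intros ? ?; reflexivity].
  - destruct IH as [Cp Cu]; [intros k Hk; apply Hx; lia|].
    split; [now apply continuity_pt_orb_p_S|].
    apply continuity_pt_ext with (fun s => / orb_p s j); [intros s; now rewrite orb_u_S|].
    apply continuity_pt_inv; [exact Cp|apply Hx; lia].
Qed.

(** * Root orbits *)

Definition is_root (n : nat) (s : R) : Prop := pos_upto n s /\ orb_p s n = 0.

Lemma is_root_lt_2 n s : is_root n s -> s < 2.
Proof.
  intros [_ Z]. destruct (Rlt_or_le s 2) as [H|H]; auto.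
  pose proof (orb_p_ge_2 s n H). lra.
Qed.

Lemma is_root_unique n a b : is_root n a -> is_root n b -> a = b.
Proof.
  intros [Ga Za] [Gb Zb].
  destruct (Rtotal_order a b) as [H|[H|H]]; auto.
  - pose proof (orb_p_lt_mono n a b Ga H). lra.
  - pose proof (orb_p_lt_mono n b a Gb H). lra.
Qed.

(* At a root of [p_n] the next term is [-1], while it is [>= 2] at [s = 2]. *)
Lemma exists_root n : exists s, is_root n s.
Proof.
  induction n as [|n [s [G Z]]].
  - exists 0. split; [intros k Hk; lia|reflexivity].
  - assert (Hs2 : s < 2) by (apply (is_root_lt_2 n); split; auto).
    assert (Hm1 : orb_p s (S n) = -1) by (rewrite orb_p_S, Z; ring).
    assert (H2 : 2 <= orb_p 2 (S n)) by (apply orb_p_ge_2; lra).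
    destruct (Ranalysis5.IVT_interv (fun a => orb_p a (S n)) s 2) as [z [[Hz1 Hz2] Hz]];
      try lra.
    { intros a Ha.
      assert (Ga : pos_upto n a) by (apply (pos_upto_mono n s a); [auto|lra]).
      apply continuity_pt_orb_p_S; apply orbit_continuity_pt;
        intros k Hk; apply Rgt_not_eq, Ga, Hk. }
    assert (Hsz : s < z) by (destruct Hz1 as [Hz1|<-]; [auto|lra]).
    exists z. split; [|exact Hz].
    intros k Hk. destruct (Nat.eq_dec k n) as [->|Hkn].
    + rewrite <- Z. now apply orb_p_lt_mono.
    + apply (pos_upto_mono n s z); [auto|lra|lia].
Qed.

(* A non-decrease [p_(k-1) <= p_k < 1] would propagate down to [r_0 = 0]. *)
Lemma orb_p_ge_1_of_orb_r k s : pos_upto k s -> 1 <= orb_r s k -> 1 <= orb_p s k.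
Proof.
  induction k as [|k IH]; intros G Hr; [rewrite orb_r_0 in Hr; lra|].
  assert (Hp : 0 < orb_p s k) by (apply G; lia).
  destruct (Rlt_or_le (orb_p s (S k)) 1) as [Hlt|]; auto. exfalso.
  assert (Hk : orb_p s k < 1).
  { rewrite orb_r_S_div in Hr. apply Rmult_le_compat_r with (r := orb_p s k) in Hr; [|lra].
    unfold Rdiv in Hr. rewrite Rmult_assoc, Rinv_l, Rmult_1_l, Rmult_1_r in Hr; lra. }
  assert (1 < / orb_p s k) by (rewrite <- Rinv_1; apply Rinv_lt_contravar; lra).
  rewrite orb_r_S in Hr by lra.
  assert (1 <= orb_p s k) by (apply IH; [apply (pos_upto_le k (S k)); auto|lra]).
  lra.
Qed.

Lemma orbit_ge_1_forward k d s : 1 <= orb_r s k -> 1 <= orb_p s k ->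
  1 <= orb_r s (k + d) /\ 1 <= orb_p s (k + d).
Proof.
  intros Hr Hp. induction d as [|d [IHr IHp]]; [rewrite Nat.add_0_r; auto|].
  rewrite Nat.add_succ_r, orb_p_S_r, orb_r_S by lra.
  assert (/ orb_p s (k + d) <= 1) by (rewrite <- Rinv_1; apply Rinv_le_contravar; lra).
  split; nra.
Qed.

(* A non-decrease at step [k] forces [p >= 1] from step [k] on, contradicting [p_n = 0]. *)
Lemma root_orbit_decreasing n a k : is_root n a -> (k < n)%nat ->
  orb_p a (S k) < orb_p a k.
Proof.
  intros [G Z] Hk. destruct (Rlt_or_le (orb_p a (S k)) (orb_p a k)) as [H|H]; auto.
  exfalso. assert (Hp : 0 < orb_p a k) by (apply G; lia).
  assert (Hr : 1 <= orb_r a (S k)).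
  { rewrite orb_r_S_div. apply Rmult_le_reg_r with (orb_p a k); auto.
    unfold Rdiv. rewrite Rmult_assoc, Rinv_l, Rmult_1_r, Rmult_1_l; lra. }
  pose proof (orb_p_ge_1_of_orb_r (S k) a (pos_upto_le (S k) n a Hk G) Hr) as Hp1.
  destruct (orbit_ge_1_forward (S k) (n - S k) a Hr Hp1) as [_ Hn].
  replace (S k + (n - S k))%nat with n in Hn by lia. lra.
Qed.

Lemma root_orbit_antitone n a i j : is_root n a -> (j <= i <= n)%nat ->
  orb_p a i <= orb_p a j.
Proof.
  intros Ha Hij. induction i as [|i IH].
  - replace j with 0%nat by lia. lra.
  - destruct (Nat.eq_dec j (S i)) as [->|Hj]; [lra|].
    pose proof (root_orbit_decreasing n a i Ha ltac:(lia)). specialize (IH ltac:(lia)). lra.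
Qed.

Lemma root_orbit_reversal m a : is_root (S m) a -> forall j, (j <= m)%nat ->
  orb_p (/ orb_p a m) j = / orb_p a (m - j) /\ orb_u (/ orb_p a m) j = orb_p a (S m - j).
Proof.
  intros [G Z] j. induction j as [|j IH]; intros Hj.
  - rewrite !Nat.sub_0_r, Z. split; reflexivity.
  - destruct IH as [IHp IHu]; [lia|].
    rewrite orb_p_S, orb_u_S, IHp, IHu.
    set (i := (m - S j)%nat).
    replace (m - j)%nat with (S i) by lia. replace (S m - j)%nat with (S (S i)) by lia.
    replace (S m - S j)%nat with (S i) by lia.
    assert (0 < orb_p a i) by (apply G; lia).
    assert (0 < orb_p a (S i)) by (apply G; lia).
    rewrite (orb_p_S a (S i)), (orb_u_S a i), Rinv_inv. split; [field|reflexivity]; lra.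
Qed.

(* [1 / p_m] is again a root of [p_(m+1)], hence equal to [a]. *)
Lemma root_orbit_symmetric m a : is_root (S m) a -> forall j, (j <= m)%nat ->
  orb_p a j = / orb_p a (m - j).
Proof.
  intros Ha. pose proof (root_orbit_reversal m a Ha) as Rev. destruct Ha as [G Z].
  assert (Hpos : forall j, (j <= m)%nat -> 0 < orb_p a j) by (intros; apply G; lia).
  assert (Hb : is_root (S m) (/ orb_p a m)).
  { split.
    - intros k Hk. rewrite (proj1 (Rev k ltac:(lia))).
      apply Rinv_0_lt_compat, Hpos. lia.
    - destruct (Rev m ltac:(lia)) as [Hp Hu].
      rewrite orb_p_S, Hp, Hu, Nat.sub_diag, Nat.sub_succ_l, Nat.sub_diag, orb_p_S by lia.
      change (orb_p a 0) with a. change (orb_u a 0) with 0.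
      assert (0 < a) by apply (Hpos 0%nat), Nat.le_0_l.
      field. lra. }
  assert (Eab : / orb_p a m = a) by (apply (is_root_unique (S m)); auto; split; auto).
  intros j Hj. rewrite <- Eab at 1. apply Rev, Hj.
Qed.

Lemma root_orbit_ge_1 n a j : is_root n a -> (2 * j + 1 <= n)%nat -> 1 <= orb_p a j.
Proof.
  intros Ha Hj. destruct n as [|m]; [lia|].
  pose proof (root_orbit_symmetric m a Ha j ltac:(lia)) as Sym.
  pose proof (root_orbit_antitone (S m) a (m - j) j Ha ltac:(lia)) as Anti.
  assert (Hp : 0 < orb_p a (m - j)) by (apply (proj1 Ha); lia).
  rewrite Sym in Anti |- *. set (q := orb_p a (m - j)) in *.
  apply Rmult_le_compat_l with (r := q) in Anti; [|lra]. rewrite Rinv_r in Anti by lra.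
  assert (q <= 1) by nra.
  rewrite <- Rinv_1. apply Rinv_le_contravar; lra.
Qed.

Lemma is_trajectory_orbit n s : is_root n s -> is_trajectory n (orb_p s, orb_u s).
Proof.
  intros [G Z]. repeat split; auto.
  intros [|j] Hj; [lia|]. rewrite Nat.sub_succ, Nat.sub_0_r.
  unfold orb_p, orb_u. rewrite orbit_S. now destruct (orbit s j).
Qed.

Lemma trajectory_orbit n p u : is_trajectory n (p, u) ->
  forall j, (j <= n)%nat -> p j = orb_p (p 0%nat) j.
Proof.
  intros (U0 & _ & _ & Rec).
  enough (E : forall j, (j <= n)%nat -> (p j, u j) = orbit (p 0%nat) j)
    by (intros j Hj; unfold orb_p; now rewrite <- E).
  induction j as [|j IH]; intros Hj; [now rewrite U0|].
  rewrite orbit_S, <- IH, Rec by lia. now rewrite Nat.sub_succ, Nat.sub_0_r.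
Qed.

Lemma traj_is_trajectory n : is_trajectory n (traj n).
Proof.
  unfold traj. apply epsilon_spec. destruct (exists_root n) as [s Hs].
  exists (orb_p s, orb_u s). now apply is_trajectory_orbit.
Qed.

Lemma p_jn_orbit n j : (j <= n)%nat -> p_jn j n = orb_p (p_jn 0 n) j.
Proof.
  unfold p_jn. pose proof (traj_is_trajectory n) as T.
  destruct (traj n) as [p u]. now apply (trajectory_orbit n p u).
Qed.

Lemma p_0n_is_root n : is_root n (p_jn 0 n).
Proof.
  pose proof (traj_is_trajectory n) as T. split.
  - intros k Hk. rewrite <- p_jn_orbit by lia. unfold p_jn.
    destruct (traj n) as [p u], T as (_ & _ & Pos & _). now apply Pos.
  - rewrite <- p_jn_orbit by lia. unfold p_jn.
    destruct (traj n) as [p u], T as (_ & Z & _). exact Z.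
Qed.

Lemma p_0n_lt_2 n : p_jn 0 n < 2.
Proof. apply (is_root_lt_2 n), p_0n_is_root. Qed.

Lemma p_0n_incr n : p_jn 0 n < p_jn 0 (S n).
Proof.
  destruct (p_0n_is_root n) as [_ Z], (p_0n_is_root (S n)) as [G' _].
  destruct (Rlt_or_le (p_jn 0 n) (p_jn 0 (S n))) as [H|H]; auto.
  pose proof (orb_p_le_mono n _ _ (pos_upto_le n (S n) _ (Nat.le_succ_diag_r n) G') H).
  pose proof (G' n (Nat.lt_succ_diag_r n)). lra.
Qed.

(** * The minimum [A_n] *)

Definition inv_tail_sum (m : nat) (x : nat -> R) : R :=
  sumR m (fun i => prodR i (m - i) (fun k => / x k)).

Lemma inv_tail_sum_S m x : inv_tail_sum (S m) x = (1 + inv_tail_sum m x) / x m.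
Proof.
  unfold inv_tail_sum. rewrite sumR_S.
  rewrite (sumR_ext m _ (fun i => prodR i (m - i) (fun k => / x k) * / x m)).
  2:{ intros i Hi. replace (S m - i)%nat with (S (m - i)) by lia.
      rewrite prodR_last. now replace (i + (m - i))%nat with m by lia. }
  rewrite sumR_mult_r. replace (S m - m)%nat with 1%nat by lia. simpl. unfold Rdiv. ring.
Qed.

Lemma f_n_inv_tail_sum n x : f_n n x = sumR n (fun j => x j + inv_tail_sum (S j) x).
Proof.
  unfold f_n. rewrite sumR_add, (sumR_triangle n (fun i d => prodR i (S d) (fun k => / x k))).
  f_equal. apply sumR_ext. intros j _. apply sumR_ext. intros i Hi. f_equal. lia.
Qed.

Lemma inv_tail_sum_nonneg m x : (forall i, (i < m)%nat -> 0 < x i) -> 0 <= inv_tail_sum m x.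
Proof.
  induction m as [|m IH]; intros Hx; [unfold inv_tail_sum; simpl; lra|].
  rewrite inv_tail_sum_S. apply Rdiv_le_0_compat.
  - assert (0 <= inv_tail_sum m x) by (apply IH; intros; apply Hx; lia). lra.
  - apply Hx. lia.
Qed.

Lemma inv_tail_sum_S_pos m x : (forall i, (i <= m)%nat -> 0 < x i) ->
  0 < inv_tail_sum (S m) x.
Proof.
  intros Hx. rewrite inv_tail_sum_S. apply Rdiv_lt_0_compat; [|apply Hx; lia].
  assert (0 <= inv_tail_sum m x) by (apply inv_tail_sum_nonneg; intros; apply Hx; lia). lra.
Qed.

(* The sum of the three tangent-line bounds [q' >= ...], [1 / q' >= ...] and
   [q / q' >= ...] at the optimal values [q' = 1 / p] and [q / q' = u p]. *)
Lemma weighted_tangent_bound p u q q' : 0 < p -> 0 < q' -> 0 <= q -> 0 <= u ->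
  (0 < u -> 0 < q) ->
  p + u * p + / p + u * p * (ln q - ln u) - (u * p + p - / p) * (ln q' - ln (/ p))
  <= (1 + q) / q' + q'.
Proof.
  intros Hp Hq' Hq Hu Huq.
  pose proof (ln_tangent_le q' (/ p) Hq' (Rinv_0_lt_compat _ Hp)) as T1.
  pose proof (ln_tangent_le (/ q') p (Rinv_0_lt_compat _ Hq') Hp) as T2.
  assert (T3 : u * p * (1 + (ln q - ln u) - (ln q' - ln (/ p))) <= q / q').
  { destruct Hu as [Hu|<-]; [|rewrite !Rmult_0_l; apply Rdiv_le_0_compat; lra].
    pose proof (ln_tangent_le (q / q') (u * p) (Rdiv_lt_0_compat _ _ (Huq Hu) Hq')
                  (Rmult_lt_0_compat _ _ Hu Hp)) as T.
    rewrite ln_div, ln_mult in T by auto. rewrite ln_Rinv by exact Hp. lra. }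
  rewrite ln_Rinv in T1, T2, T3 |- * by auto.
  replace ((1 + q) / q') with (/ q' + q / q') by (field; lra). nra.
Qed.

Definition orbit_value (n : nat) (s : R) : R :=
  sumR n (fun j => orb_p s j + orb_r s j + orb_u s (S j)).

(* Summing [weighted_tangent_bound] over [j], the potential terms telescope and vanish
   at both ends since [r_0 = 0 = r_n]. *)
Lemma orbit_value_le_f_n n s x : is_root n s -> (forall i, (i < n)%nat -> 0 < x i) ->
  orbit_value n s <= f_n n x.
Proof.
  intros [G Z] Hx.
  set (pot := fun j => orb_r s j * (ln (inv_tail_sum j x) - ln (orb_u s j))).
  assert (Step : forall j, (j < n)%nat ->
    orb_p s j + orb_r s j + orb_u s (S j) + (pot j - pot (S j))
    <= x j + inv_tail_sum (S j) x).
  { intros j Hj.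
    assert (Hp : 0 < orb_p s j) by (apply G, Hj).
    assert (HQ' : 0 < inv_tail_sum (S j) x)
      by (apply inv_tail_sum_S_pos; intros; apply Hx; lia).
    assert (HQ : 0 <= inv_tail_sum j x) by (apply inv_tail_sum_nonneg; intros; apply Hx; lia).
    assert (Ex : x j = (1 + inv_tail_sum j x) / inv_tail_sum (S j) x).
    { pose proof (Hx j Hj). rewrite inv_tail_sum_S. field. lra. }
    assert (Huq : 0 < orb_u s j -> 0 < inv_tail_sum j x).
    { destruct j as [|k]; [unfold orb_u; simpl; lra|].
      intros _. apply inv_tail_sum_S_pos. intros; apply Hx; lia. }
    pose proof (weighted_tangent_bound _ _ _ _ Hp HQ' HQ
                  (orb_u_nonneg j s (pos_upto_le j n s (Nat.lt_le_incl _ _ Hj) G)) Huq).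
    unfold pot. rewrite orb_r_S, orb_u_S, Ex by lra. unfold orb_r. lra. }
  rewrite f_n_inv_tail_sum. eapply Rle_trans; [|exact (sumR_le _ _ _ Step)].
  rewrite (sumR_add n _ (fun j => pot j - pot (S j))), sumR_telescope. unfold orbit_value.
  unfold pot. rewrite orb_r_0. unfold orb_r. rewrite Z. lra.
Qed.

Lemma f_n_orbit n s : is_root n s ->
  let x := fun j => (1 + orb_u s j) * orb_p s j in
  (forall i, (i < n)%nat -> 0 < x i) /\ f_n n x = orbit_value n s.
Proof.
  intros [G Z] x.
  assert (Hu : forall j, (j <= n)%nat -> 0 <= orb_u s j)
    by (intros j Hj; apply orb_u_nonneg, (pos_upto_le j n); auto).
  assert (Hx : forall i, (i < n)%nat -> 0 < x i).
  { intros i Hi. unfold x. pose proof (Hu i ltac:(lia)). pose proof (G i Hi). nra. }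
  split; [exact Hx|].
  assert (HQ : forall j, (j <= n)%nat -> inv_tail_sum j x = orb_u s j).
  { induction j as [|j IH]; intros Hj; [reflexivity|].
    rewrite inv_tail_sum_S, IH, orb_u_S by lia. unfold x.
    pose proof (Hu j ltac:(lia)). pose proof (G j ltac:(lia)). field. lra. }
  rewrite f_n_inv_tail_sum. apply sumR_ext. intros i Hi.
  rewrite HQ by lia. unfold x, orb_r. ring.
Qed.

Lemma A_n_orbit_value n : A_n n = orbit_value n (p_jn 0 n).
Proof.
  pose proof (p_0n_is_root n) as Hroot.
  unfold A_n.
  rewrite (is_glb_Rbar_unique _ (Finite (orbit_value n (p_jn 0 n)))); [reflexivity|].
  split.
  - intros y [x [Hx ->]]. now apply orbit_value_le_f_n.
  - intros b Hb. destruct (f_n_orbit n _ Hroot) as [Hx E].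
    apply Hb. eexists. split; [exact Hx|now rewrite E].
Qed.

Lemma C_n_orbit n : C_n n =
  sumR n (fun j => (1 - orb_r (p_jn 0 n) j) - am_gm_gap (orb_p (p_jn 0 n) j)).
Proof.
  unfold C_n. rewrite A_n_orbit_value, Rmult_comm, <- sumR_const. unfold orbit_value.
  rewrite <- sumR_sub. apply sumR_ext. intros i _. rewrite orb_u_S. unfold am_gm_gap. ring.
Qed.

(** * Passage to the limit *)

Definition p0_star : R := real (Lim_seq (fun n => p_jn 0 n)).
Definition p_star (j : nat) : R := orb_p p0_star j.

Lemma is_lim_p_0n : is_lim_seq (fun n => p_jn 0 n) p0_star.
Proof.
  apply Lim_seq_correct', (ex_finite_lim_seq_incr _ 2).
  - intros n. left. apply p_0n_incr.
  - intros n. left. apply p_0n_lt_2.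
Qed.

Lemma p_0n_le_p0_star n : p_jn 0 n <= p0_star.
Proof.
  apply (is_lim_seq_incr_compare (fun n => p_jn 0 n)); [apply is_lim_p_0n|].
  intros; left; apply p_0n_incr.
Qed.

Lemma orb_p_le_p_star n j : (j <= n)%nat -> orb_p (p_jn 0 n) j <= p_star j.
Proof.
  intros Hj. apply orb_p_le_mono; [|apply p_0n_le_p0_star].
  apply (pos_upto_le j n); [exact Hj|apply p_0n_is_root].
Qed.

Lemma p_star_pos k : 0 < p_star k.
Proof.
  apply Rlt_le_trans with (orb_p (p_jn 0 (S k)) k); [apply p_0n_is_root; lia|].
  apply orb_p_le_p_star. lia.
Qed.

Lemma is_lim_orbit j :
  is_lim_seq (fun n => orb_p (p_jn 0 n) j) (p_star j) /\
  is_lim_seq (fun n => orb_u (p_jn 0 n) j) (orb_u p0_star j).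
Proof.
  destruct (orbit_continuity_pt j p0_star) as [Cp Cu].
  { intros k _. apply Rgt_not_eq, p_star_pos. }
  split; [apply (is_lim_seq_continuous (fun s => orb_p s j))
        |apply (is_lim_seq_continuous (fun s => orb_u s j))]; auto; apply is_lim_p_0n.
Qed.

Lemma p_star_ge_1 j : 1 <= p_star j.
Proof.
  apply Rle_trans with (orb_p (p_jn 0 (2 * j + 1)) j).
  - apply (root_orbit_ge_1 (2 * j + 1)); [apply p_0n_is_root|lia].
  - apply orb_p_le_p_star. lia.
Qed.

Lemma p_star_decr j : p_star (S j) <= p_star j.
Proof.
  assert (H : Rbar_le (p_star (S j)) (p_star j)); [|exact H].
  apply (is_lim_seq_le_loc (fun n => orb_p (p_jn 0 n) (S j)) (fun n => orb_p (p_jn 0 n) j)).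
  - exists (S j). intros n Hn. left. apply (root_orbit_decreasing n); [apply p_0n_is_root|lia].
  - apply is_lim_orbit.
  - apply is_lim_orbit.
Qed.

Lemma orb_r_star_telescope N : orb_r p0_star N = sumR N (fun j => p_star j - / p_star j).
Proof.
  induction N as [|N IH]; [apply orb_r_0|].
  rewrite sumR_S, <- IH, orb_r_S; [unfold p_star; ring|]. apply Rgt_not_eq, p_star_pos.
Qed.

Lemma orb_r_star_le_1 N : orb_r p0_star N <= 1.
Proof.
  destruct N as [|N]; [rewrite orb_r_0; lra|].
  rewrite orb_r_S_div. fold (p_star (S N)) (p_star N).
  pose proof (p_star_decr N). pose proof (p_star_pos N).
  apply Rmult_le_reg_r with (p_star N); auto. unfold Rdiv.
  rewrite Rmult_assoc, Rinv_l; lra.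
Qed.

Definition a_star (i : nat) : R := 1 - orb_r p0_star (S i).
Definition b_star (j : nat) : R := am_gm_gap (p_star j).
Definition A_star : R := seriesR a_star.
Definition B_star : R := seriesR b_star.

Lemma a_star_bounds i : 0 <= a_star i <= ln (p_star i) - ln (p_star (S i)).
Proof.
  unfold a_star. rewrite orb_r_S_div.
  apply one_sub_div_le_ln; [apply p_star_pos|apply p_star_decr].
Qed.

Lemma b_star_bounds j : 0 <= b_star j <= p_star j - / p_star j.
Proof.
  split; [apply am_gm_gap_nonneg, p_star_pos|apply am_gm_gap_le_sub_inv, p_star_ge_1].
Qed.

Lemma is_lim_A_star : is_lim_seq (fun N => sumR N a_star) A_star.
Proof.
  apply (is_lim_seq_sumR_bounded _ (ln (p_star 0))); [apply a_star_bounds|].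
  intros n. eapply Rle_trans; [apply sumR_le; intros i _; apply a_star_bounds|].
  rewrite (sumR_telescope n (fun i => ln (p_star i))).
  assert (0 <= ln (p_star n)) by (rewrite <- ln_1; apply ln_le; [lra|apply p_star_ge_1]).
  lra.
Qed.

Lemma is_lim_B_star : is_lim_seq (fun N => sumR N b_star) B_star.
Proof.
  apply (is_lim_seq_sumR_bounded _ 1); [apply b_star_bounds|]. intros n.
  eapply Rle_trans; [apply sumR_le; intros j _; apply b_star_bounds|].
  rewrite <- orb_r_star_telescope. apply orb_r_star_le_1.
Qed.

Lemma is_lim_p_star : is_lim_seq p_star 1.
Proof.
  set (d := fun j => p_star j - / p_star j).
  assert (Hd : is_lim_seq d 0).
  { apply (is_lim_seq_series_term d (seriesR d)), (is_lim_seq_sumR_bounded _ 1).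
    - intros j. pose proof (b_star_bounds j). pose proof (am_gm_gap_nonneg _ (p_star_pos j)).
      unfold d. lra.
    - intros n. rewrite <- orb_r_star_telescope. apply orb_r_star_le_1. }
  apply (is_lim_seq_le_le (fun _ => 1) p_star (fun j => 1 + d j)).
  - intros j. pose proof (p_star_ge_1 j).
    assert (/ p_star j <= 1) by (rewrite <- Rinv_1; apply Rinv_le_contravar; lra).
    unfold d. lra.
  - apply is_lim_seq_const.
  - replace (Finite 1) with (Finite (1 + 0)) by (f_equal; ring).
    apply is_lim_seq_plus'; [apply is_lim_seq_const|exact Hd].
Qed.

Lemma is_lim_S_N : is_lim_seq
  (fun N => sumR (S N) (fun j => 3 - 2 * p_star j - p_star j * orb_u p0_star j))
  (A_star - B_star).
Proof.
  apply is_lim_seq_ext with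
    (fun N => 1 + sumR N a_star - sumR (S N) b_star - orb_r p0_star (S N)).
  { intros N. rewrite orb_r_star_telescope.
    rewrite (sumR_ext (S N) (fun j => 3 - 2 * p_star j - p_star j * orb_u p0_star j)
               (fun j => ((1 - orb_r p0_star j) - b_star j) - (p_star j - / p_star j)))
      by (intros j _; unfold b_star, am_gm_gap, orb_r, p_star; ring).
    rewrite (sumR_sub _ (fun j => 1 - orb_r p0_star j - b_star j)),
      (sumR_sub _ (fun j => 1 - orb_r p0_star j)),
      (sumR_shift N (fun j => 1 - orb_r p0_star j)), orb_r_0.
    unfold a_star. ring. }
  replace (A_star - B_star) with (1 + A_star - B_star - 1 / 1) by field.
  apply is_lim_seq_minus'; [apply is_lim_seq_minus'|].
  - apply is_lim_seq_plus'; [apply is_lim_seq_const|apply is_lim_A_star].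
  - apply (is_lim_seq_incr_1 (fun N => sumR N b_star)), is_lim_B_star.
  - apply is_lim_seq_ext with (fun N => p_star (S N) / p_star N).
    { intros N. symmetry. apply orb_r_S_div. }
    apply is_lim_seq_div'; [apply (is_lim_seq_incr_1 p_star)| |]; try apply is_lim_p_star. lra.
Qed.

(** * The limit of [C_n] *)

Definition a_n (n i : nat) : R := 1 - orb_r (p_jn 0 n) (S i).
Definition b_n (n j : nat) : R := am_gm_gap (orb_p (p_jn 0 n) j).

Lemma C_n_split n : (1 <= n)%nat -> C_n n = 1 + sumR (n - 1) (a_n n) - sumR n (b_n n).
Proof.
  destruct n as [|m]; [lia|]. intros _.
  rewrite C_n_orbit, sumR_sub, (sumR_shift m (fun j => 1 - orb_r (p_jn 0 (S m)) j)), orb_r_0.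
  rewrite Nat.sub_succ, Nat.sub_0_r. unfold a_n, b_n. ring.
Qed.

Lemma is_lim_a_n i : is_lim_seq (fun n => a_n n i) (a_star i).
Proof.
  apply is_lim_seq_minus'; [apply is_lim_seq_const|].
  apply is_lim_seq_mult'; apply is_lim_orbit.
Qed.

Lemma is_lim_b_n j : is_lim_seq (fun n => b_n n j) (b_star j).
Proof.
  apply is_lim_seq_continuous; [|apply is_lim_orbit].
  apply am_gm_gap_continuity_pt, Rgt_not_eq, p_star_pos.
Qed.

Lemma a_n_palindrome n i : (i < n - 1)%nat -> a_n n i = a_n n (n - 1 - 1 - i)%nat.
Proof.
  destruct n as [|m]; [simpl; lia|]. rewrite Nat.sub_succ, Nat.sub_0_r. intros Hi.
  pose proof (p_0n_is_root (S m)) as Hroot. set (a := p_jn 0 (S m)) in *.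
  pose proof (root_orbit_symmetric m a Hroot (m - i) ltac:(lia)) as E1.
  pose proof (root_orbit_symmetric m a Hroot (m - 1 - i) ltac:(lia)) as E2.
  replace (m - (m - i))%nat with i in E1 by lia.
  replace (m - (m - 1 - i))%nat with (S i) in E2 by lia.
  assert (0 < orb_p a i) by (apply Hroot; lia).
  assert (0 < orb_p a (S i)) by (apply Hroot; lia).
  unfold a_n. fold a. rewrite !orb_r_S_div.
  replace (S (m - 1 - i)) with (m - i)%nat by lia. rewrite E1, E2. field. lra.
Qed.

Lemma b_n_palindrome n j : (j < n)%nat -> b_n n j = b_n n (n - 1 - j)%nat.
Proof.
  destruct n as [|m]; [lia|]. rewrite Nat.sub_succ, Nat.sub_0_r. intros Hj.
  pose proof (p_0n_is_root (S m)) as Hroot.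
  assert (0 < orb_p (p_jn 0 (S m)) (m - j)) by (apply Hroot; lia).
  unfold b_n. rewrite (root_orbit_symmetric m _ Hroot j) by lia.
  apply am_gm_gap_inv. lra.
Qed.

(* The terms are at most [ln p_i - ln p_(i+1)], and by symmetry
   [- ln p_M = ln p_(n-1-M) <= ln p_K]. *)
Lemma a_n_tail n K M : (K <= M <= (n - 1) - (n - 1) / 2)%nat ->
  Rabs (sumR M (a_n n) - sumR K (a_n n)) <= 2 * ln (p_star K).
Proof.
  intros HKM.
  assert (HlnK : 0 <= ln (p_star K))
    by (rewrite <- ln_1; apply ln_le; [lra|apply p_star_ge_1]).
  destruct (Nat.eq_dec K M) as [<-|HKM']; [rewrite Rminus_diag, Rabs_R0; lra|].
  destruct n as [|m]; [simpl in HKM; lia|]. rewrite Nat.sub_succ, Nat.sub_0_r in HKM.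
  pose proof (div2_bounds m).
  pose proof (p_0n_is_root (S m)) as Hroot. set (a := p_jn 0 (S m)) in *.
  assert (Hpos : forall i, (i <= m)%nat -> 0 < orb_p a i) by (intros; apply Hroot; lia).
  destruct (sumR_diff_le K M (a_n (S m)) (fun i => ln (orb_p a i) - ln (orb_p a (S i))))
    as [H0 H1]; [lia| |].
  { intros i Hi. unfold a_n. fold a. rewrite orb_r_S_div.
    apply one_sub_div_le_ln; [apply Hpos; lia|].
    left. apply (root_orbit_decreasing (S m)); [exact Hroot|lia]. }
  rewrite !(sumR_telescope _ (fun i => ln (orb_p a i))) in H1.
  assert (HK : ln (orb_p a K) <= ln (p_star K))
    by (apply ln_le; [apply Hpos; lia|apply orb_p_le_p_star; lia]).
  assert (HM : - ln (orb_p a M) <= ln (orb_p a K)).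
  { rewrite (root_orbit_symmetric m a Hroot M), ln_Rinv, Ropp_involutive
      by (try apply Hpos; lia).
    apply ln_le; [apply Hpos; lia|]. apply (root_orbit_antitone (S m)); [exact Hroot|lia]. }
  rewrite Rabs_pos_eq by lra. lra.
Qed.

Lemma b_n_tail n K M : (K <= M <= n - n / 2)%nat ->
  Rabs (sumR M (b_n n) - sumR K (b_n n)) <= B_star - sumR K b_star.
Proof.
  intros HKM. pose proof (div2_bounds n). pose proof (p_0n_is_root n) as Hroot.
  destruct (sumR_diff_le K M (b_n n) b_star) as [H0 H1]; [lia| |].
  { intros j Hj. unfold b_n, b_star. split.
    - apply am_gm_gap_nonneg, Hroot. lia.
    - apply am_gm_gap_le. split; [apply (root_orbit_ge_1 n); [exact Hroot|lia]|].
      apply orb_p_le_p_star. lia. }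
  pose proof (sumR_le_lim b_star B_star (fun j => proj1 (b_star_bounds j)) is_lim_B_star M).
  rewrite Rabs_pos_eq by lra. lra.
Qed.

Lemma is_lim_ln_p_star : is_lim_seq (fun K => 2 * ln (p_star K)) 0.
Proof.
  replace 0 with (2 * ln 1) by (rewrite ln_1; ring).
  apply (is_lim_seq_scal_l _ 2 (ln 1)), (is_lim_seq_continuous ln p_star 1).
  - apply continuity_pt_filterlim, continuous_ln. lra.
  - apply is_lim_p_star.
Qed.

Lemma is_lim_B_star_tail : is_lim_seq (fun K => B_star - sumR K b_star) 0.
Proof.
  replace 0 with (B_star - B_star) by ring.
  apply is_lim_seq_minus'; [apply is_lim_seq_const|apply is_lim_B_star].
Qed.

Lemma is_lim_C_n : is_lim_seq C_n (1 + 2 * A_star - 2 * B_star).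
Proof.
  apply is_lim_seq_ext_loc with (fun n => 1 + sumR (n - 1) (a_n n) - sumR n (b_n n)).
  { exists 1%nat. intros n Hn. symmetry. now apply C_n_split. }
  apply is_lim_seq_minus'; [apply is_lim_seq_plus'; [apply is_lim_seq_const|]|].
  - apply (is_lim_seq_sumR_palindrome a_n a_star _ A_star is_lim_a_n is_lim_A_star
             is_lim_ln_p_star (fun n => (n - 1)%nat)).
    + intros K. exists (S K). intros n Hn. lia.
    + intros n i Hi. now apply a_n_palindrome.
    + intros n K M HKM. now apply a_n_tail.
  - apply (is_lim_seq_sumR_palindrome b_n b_star _ B_star is_lim_b_n is_lim_B_star
             is_lim_B_star_tail (fun n => n)).
    + intros K. exists K. intros n Hn. exact Hn.
    + intros n i Hi. now apply b_n_palindrome.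
    + intros n K M HKM. now apply b_n_tail.
Qed.

Theorem theorem1 :
  exists pstar : nat -> R,
    (forall j : nat, is_lim_seq (fun n : nat => p_jn j n) (pstar j)) /\
    let ustar := fun j : nat => match j with O => 0 | S k => / pstar k end in
    let S_N := fun N : nat => sumR (S N) (fun j => 3 - 2 * pstar j - pstar j * ustar j) in
    exists S C : R,
      is_lim_seq S_N S /\ is_lim_seq (fun n : nat => C_n n) C /\ C = 2 * S + 1.
Proof.
  exists p_star. split.
  - intros j.
    apply is_lim_seq_ext_loc with (fun n => orb_p (p_jn 0 n) j); [|apply is_lim_orbit].
    exists j. intros n Hn. symmetry. now apply p_jn_orbit.
  - intros ustar S_N. exists (A_star - B_star), (1 + 2 * A_star - 2 * B_star).
    split; [|split; [apply is_lim_C_n|ring]].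
    apply is_lim_seq_ext with (2 := is_lim_S_N). intros N. unfold S_N.
    apply sumR_ext. intros [|k] _; [reflexivity|]. unfold ustar. now rewrite orb_u_S.
Qed.
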